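(* Let $Q$ be a connected quandle. The following are equivalent: (i) for every set $S$, every quandle cocycle of $Q$ with values in $\mathrm{Sym}_S$ is cohomologous to the trivial cocycle; (ii) for every group $K$, every quandle cocycle of $Q$ with values in $K$ is cohomologous (via maps $\gamma:Q\to K$) to the trivial cocycle; (iii) $Q$ is simply connected.
   Context: A quandle is a set $Q$ with a binary operation $*$ such that every left translation $L_x:y\mapsto x*y$ is bijective, $x*(y*z)=(x*y)*(x*z)$ and $x*x=x$; $Q$ is connected if $\langle L_x:x\in Q\rangle$ is transitive on $Q$. For a group $K$, a quandle cocycle with values in $K$ is $\theta:Q\times Q\to K$ with $\theta_{x*y,x*z}\theta_{x,z}=\theta_{x,y*z}\theta_{y,z}$ and $\theta_{x,x}=1$; it is cohomologous to the trivial cocycle (constantly $1$) if there is $\gamma:Q\to K$ with $\theta_{x,y}=\gamma_{x*y}\gamma_y^{-1}$ for all $x,y$. A cover of $Q$ is a quandle $E$ with a surjective homomorphism $\pi:E\to Q$ such that $\pi(u)=\pi(v)$ implies $L_u=L_v$; $Q$ is simply connected if $Q$ is connected and every cover of $Q$ is equivalent (isomorphic over $Q$) to a trivial cover $Q\times S$ with operation $(x,a)*(y,b)=(x*y,b)$. *)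

From Stdlib Require Import Setoid FunctionalExtensionality ProofIrrelevance.

Set Implicit Arguments.

Definition bij {A B : Type} (f : A -> B) : Prop :=
  exists g : B -> A, (forall a, g (f a) = a) /\ (forall b, f (g b) = b).

Record quandle := Quandle {
  qcar :> Type;
  qop : qcar -> qcar -> qcar;
  qop_bij : forall x : qcar, bij (qop x);
  qop_dist : forall x y z : qcar, qop x (qop y z) = qop (qop x y) (qop x z);
  qop_idem : forall x : qcar, qop x x = x }.

Arguments qop {q}.
Arguments qop_bij {q}.
Arguments qop_dist {q}.
Arguments qop_idem {q}.

(** Orbits of the group <L_x : x in Q> (the inner group action):
    the smallest set containing x closed under every L_z and every L_z^{-1}. *)
Inductive inner_orbit {Q : quandle} (x : Q) : Q -> Prop :=
| io_refl : inner_orbit x x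
| io_L : forall y z : Q, inner_orbit x y -> inner_orbit x (qop z y)
| io_Linv : forall y z : Q, inner_orbit x (qop z y) -> inner_orbit x y.

Definition connected (Q : quandle) : Prop := forall x y : Q, inner_orbit x y.

Definition qhom {E Q : quandle} (f : E -> Q) : Prop :=
  forall u v : E, f (qop u v) = qop (f u) (f v).

Record group := Group {
  gcar :> Type;
  gmul : gcar -> gcar -> gcar;
  gone : gcar;
  ginv : gcar -> gcar;
  gmulA : forall a b c, gmul a (gmul b c) = gmul (gmul a b) c;
  gmul1 : forall a, gmul gone a = a;
  gmulV : forall a, gmul (ginv a) a = gone }.

Arguments gmul {g}.
Arguments gone {g}.
Arguments ginv {g}.

Definition quandle_cocycle {Q : quandle} {K : group} (theta : Q -> Q -> K) : Prop :=
  (forall x y z : Q,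
      gmul (theta (qop x y) (qop x z)) (theta x z)
      = gmul (theta x (qop y z)) (theta y z))
  /\ (forall x : Q, theta x x = gone).

Definition cohomologous_trivial {Q : quandle} {K : group} (theta : Q -> Q -> K) : Prop :=
  exists gamma : Q -> K, forall x y : Q, theta x y = gmul (gamma (qop x y)) (ginv (gamma y)).

Record sym_elt (S : Type) := SymElt {
  sfun : S -> S;
  sinv : S -> S;
  sfunK : forall s, sinv (sfun s) = s;
  sinvK : forall s, sfun (sinv s) = s }.

Lemma sym_elt_eq (S : Type) (p q : sym_elt S) :
  (forall s, sfun p s = sfun q s) -> p = q.
Proof.
  destruct p as [f g fK gK], q as [f' g' fK' gK']; simpl; intros H.
  assert (Ef : f = f') by (apply functional_extensionality; exact H).
  subst f'.
  assert (Eg : g = g').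
  { apply functional_extensionality; intro s.
    rewrite <- (gK s) at 2. rewrite fK'. reflexivity. }
  subst g'.
  rewrite (proof_irrelevance _ fK fK'), (proof_irrelevance _ gK gK').
  reflexivity.
Qed.

Definition sym_mul (S : Type) (p q : sym_elt S) : sym_elt S.
Proof.
  refine (@SymElt S (fun s => sfun p (sfun q s)) (fun s => sinv q (sinv p s)) _ _).
  - intro s. rewrite sfunK, sfunK. reflexivity.
  - intro s. rewrite sinvK, sinvK. reflexivity.
Defined.

Definition sym_one (S : Type) : sym_elt S :=
  @SymElt S (fun s => s) (fun s => s) (fun s => eq_refl) (fun s => eq_refl).

Definition sym_inv (S : Type) (p : sym_elt S) : sym_elt S :=
  @SymElt S (sinv p) (sfun p) (sinvK p) (sfunK p).

Definition Sym (S : Type) : group.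
Proof.
  refine (@Group (sym_elt S) (@sym_mul S) (sym_one S) (@sym_inv S) _ _ _).
  - intros a b c. apply sym_elt_eq. intro s. reflexivity.
  - intros a. apply sym_elt_eq. intro s. reflexivity.
  - intros a. apply sym_elt_eq. intro s. simpl. apply sfunK.
Defined.

Definition triv_op (Q : quandle) (S : Type) (u v : Q * S) : Q * S :=
  (qop (fst u) (fst v), snd v).

Definition trivial_cover (Q : quandle) (S : Type) : quandle.
Proof.
  refine (@Quandle (Q * S)%type (@triv_op Q S) _ _ _).
  - intros [x a]. destruct (qop_bij x) as [g [Hg1 Hg2]].
    exists (fun v => (g (fst v), snd v)). split.
    + intros [y b]. unfold triv_op; simpl. rewrite Hg1. reflexivity.
    + intros [y b]. unfold triv_op; simpl. rewrite Hg2. reflexivity.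
  - intros [x a] [y b] [z c]. unfold triv_op; simpl. rewrite qop_dist. reflexivity.
  - intros [x a]. unfold triv_op; simpl. rewrite qop_idem. reflexivity.
Defined.

Definition is_cover {E Q : quandle} (pi : E -> Q) : Prop :=
  qhom pi
  /\ (forall x : Q, exists u : E, pi u = x)
  /\ (forall u v : E, pi u = pi v -> forall w : E, qop u w = qop v w).

Definition cover_is_trivial {E Q : quandle} (pi : E -> Q) : Prop :=
  exists (S : Type) (f : E -> trivial_cover Q S),
    bij f /\ qhom f /\ (forall u : E, fst (f u) = pi u).

Definition simply_connected (Q : quandle) : Prop :=
  connected Q /\
  forall (E : quandle) (pi : E -> Q), is_cover pi -> cover_is_trivial pi.

From Stdlib Require Import Classical ClassicalEpsilon.

(* (i) => (ii) by letting K act on itself by left multiplication, and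
   (iii) => (ii) by trivializing the cover Q x_theta K -> Q.  For (ii) => (iii),
   connectedness lets the inner group carry one fibre S of a cover E -> Q
   bijectively onto every other fibre; fixing such identifications, the left
   translation by any lift of x, from the fibre over y to the fibre over x * y,
   becomes a permutation theta_{x,y} of S.  This is a Sym_S-valued cocycle,
   and a trivialization gamma of it straightens the identifications into an
   isomorphism E = Q x S over Q. *)

Section GroupFacts.

Variable K : group.

Lemma gmul_idem_one (b : K) : gmul b b = b -> b = gone.
Proof.
  intros Hb. rewrite <- (gmul1 K b) at 1. rewrite <- (gmulV K b).
  rewrite <- gmulA, Hb. reflexivity.
Qed.

Lemma gmulVr (a : K) : gmul a (ginv a) = gone.
Proof.
  apply gmul_idem_one.
  rewrite <- gmulA, (gmulA K (ginv a)), gmulV, gmul1. reflexivity.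
Qed.

Lemma gmul1r (a : K) : gmul a gone = a.
Proof. rewrite <- (gmulV K a), gmulA, gmulVr, gmul1. reflexivity. Qed.

Lemma gmulKr (a b : K) : gmul (gmul a b) (ginv b) = a.
Proof. rewrite <- gmulA, gmulVr, gmul1r. reflexivity. Qed.

End GroupFacts.

Definition group_morphism {K H : group} (f : K -> H) : Prop :=
  forall a b : K, f (gmul a b) = gmul (f a) (f b).

Lemma group_morphism_one {K H : group} (f : K -> H) :
  group_morphism f -> f gone = gone.
Proof.
  intros Hf. apply gmul_idem_one. rewrite <- Hf, gmul1. reflexivity.
Qed.

Lemma quandle_cocycle_morphism {Q : quandle} {K H : group} (f : K -> H)
    (theta : Q -> Q -> K) :
  group_morphism f -> quandle_cocycle theta ->
  quandle_cocycle (fun x y => f (theta x y)).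
Proof.
  intros Hf [Hc Hd]. split.
  - intros x y z. rewrite <- !Hf, Hc. reflexivity.
  - intros x. rewrite Hd. apply group_morphism_one, Hf.
Qed.

Lemma sfun_mul (S : Type) (p q : Sym S) (s : S) :
  sfun (gmul p q) s = sfun p (sfun q s).
Proof. reflexivity. Qed.

Lemma sfun_inv (S : Type) (p : Sym S) (s : S) : sfun (ginv p) s = sinv p s.
Proof. reflexivity. Qed.

Lemma sfun_one (S : Type) (s : S) : sfun (gone : Sym S) s = s.
Proof. reflexivity. Qed.

Definition sym_of_bij {S : Type} {f : S -> S} (Hf : bij f) : Sym S :=
  let (g, Hg) := constructive_indefinite_description _ Hf in
  @SymElt S f g (proj1 Hg) (proj2 Hg).

Lemma sfun_sym_of_bij {S : Type} {f : S -> S} (Hf : bij f) :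
  sfun (sym_of_bij Hf) = f.
Proof.
  unfold sym_of_bij. destruct (constructive_indefinite_description _ Hf).
  reflexivity.
Qed.

Definition lreg {K : group} (k : K) : Sym K.
Proof.
  refine (@SymElt K (gmul k) (gmul (ginv k)) _ _); intro a.
  - rewrite gmulA, gmulV, gmul1. reflexivity.
  - rewrite gmulA, gmulVr, gmul1. reflexivity.
Defined.

Lemma lreg_morphism (K : group) : group_morphism (@lreg K).
Proof. intros a b. apply sym_elt_eq. intro s. symmetry. apply gmulA. Qed.

(* The coboundary is read off by evaluating at the unit. *)
Lemma cohomologous_trivial_lreg {Q : quandle} {K : group} (theta : Q -> Q -> K) :
  cohomologous_trivial (fun x y => lreg (theta x y)) -> cohomologous_trivial theta.
Proof.
  intros [g Hg]. exists (fun x => sfun (g x) gone). intros x y.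
  assert (Hxy : gmul (theta x y) (sfun (g y) gone) = sfun (g (qop x y)) gone).
  { change (sfun (lreg (theta x y)) (sfun (g y) gone) = sfun (g (qop x y)) gone).
    rewrite Hg, sfun_mul, sfun_inv, sfunK. reflexivity. }
  rewrite <- Hxy. symmetry. apply gmulKr.
Qed.

Lemma cohomologous_trivial_of_Sym (Q : quandle) :
  (forall (S : Type) (theta : Q -> Q -> Sym S),
      quandle_cocycle theta -> cohomologous_trivial theta) ->
  forall (K : group) (theta : Q -> Q -> K),
    quandle_cocycle theta -> cohomologous_trivial theta.
Proof.
  intros Hsym K theta Htheta. apply cohomologous_trivial_lreg, Hsym.
  apply quandle_cocycle_morphism; [apply lreg_morphism | exact Htheta].
Qed.

Definition ext_op {Q : quandle} {K : group} (theta : Q -> Q -> K)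
    (u v : Q * K) : Q * K :=
  (qop (fst u) (fst v), gmul (theta (fst u) (fst v)) (snd v)).

Definition ext_quandle {Q : quandle} {K : group} {theta : Q -> Q -> K}
    (Htheta : quandle_cocycle theta) : quandle.
Proof.
  refine (@Quandle (Q * K)%type (ext_op theta) _ _ _).
  - intros [x a]. destruct (qop_bij x) as [h [hK Kh]].
    exists (fun v => (h (fst v), gmul (ginv (theta x (h (fst v)))) (snd v))).
    split; intros [y b]; unfold ext_op; simpl.
    + rewrite hK, gmulA, gmulV, gmul1. reflexivity.
    + rewrite Kh, gmulA, gmulVr, gmul1. reflexivity.
  - intros [x a] [y b] [z c]. unfold ext_op; simpl. destruct Htheta as [Hc _].
    rewrite qop_dist, !gmulA, Hc. reflexivity.
  - intros [x a]. unfold ext_op; simpl. destruct Htheta as [_ Hd].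
    rewrite qop_idem, Hd, gmul1. reflexivity.
Defined.

Lemma ext_quandle_cover {Q : quandle} {K : group} {theta : Q -> Q -> K}
    (Htheta : quandle_cocycle theta) :
  is_cover (fst : ext_quandle Htheta -> Q).
Proof.
  split; [| split].
  - intros u v. reflexivity.
  - intros x. exists (x, gone). reflexivity.
  - intros [x a] [y b] Exy w. simpl in Exy. subst y. reflexivity.
Qed.

(* With s0 a fixed sheet of Q x S, gamma x is the K-coordinate of the point
   over x lying on that sheet. *)
Lemma cohomologous_trivial_of_ext_trivial {Q : quandle} {K : group}
    {theta : Q -> Q -> K} (Htheta : quandle_cocycle theta) :
  cover_is_trivial (fst : ext_quandle Htheta -> Q) -> cohomologous_trivial theta.
Proof.
  intros [S [f [[g [gK Kg]] [fhom ffst]]]].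
  destruct (classic (inhabited Q)) as [[x0] | HQ].
  2: { exists (fun _ => gone). intros x. destruct (HQ (inhabits x)). }
  set (s0 := snd (f (x0, gone))).
  set (gamma := fun x => snd (g (x, s0))).
  exists gamma.
  assert (Hg : forall x, g (x, s0) = (x, gamma x)).
  { intros x. rewrite (surjective_pairing (g (x, s0))). f_equal.
    rewrite <- ffst, Kg. reflexivity. }
  intros x y.
  assert (Hf : f (ext_op theta (x, gone) (y, gamma y)) = (qop x y, s0)).
  { change (f (@qop (ext_quandle Htheta) (x, gone) (y, gamma y)) = (qop x y, s0)).
    rewrite fhom, <- Hg, Kg. unfold qop; simpl. unfold triv_op; simpl.
    rewrite ffst. reflexivity. }
  assert (Hxy : gamma (qop x y) = gmul (theta x y) (gamma y)).
  { unfold gamma at 1. rewrite <- Hf, gK. reflexivity. }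
  rewrite Hxy. symmetry. apply gmulKr.
Qed.

Lemma cohomologous_trivial_of_simply_connected (Q : quandle) :
  simply_connected Q ->
  forall (K : group) (theta : Q -> Q -> K),
    quandle_cocycle theta -> cohomologous_trivial theta.
Proof.
  intros [_ Hsc] K theta Htheta.
  apply (cohomologous_trivial_of_ext_trivial Htheta), Hsc, ext_quandle_cover.
Qed.

Lemma qop_inj {Q : quandle} (x a b : Q) : qop x a = qop x b -> a = b.
Proof.
  intros Hab. destruct (qop_bij x) as [g [gK _]].
  rewrite <- (gK a), <- (gK b), Hab. reflexivity.
Qed.

Section Cover.

Variables (Q E : quandle) (pi : E -> Q).
Hypothesis pi_hom : qhom pi.
Hypothesis pi_surj : forall x : Q, exists u : E, pi u = x.
Hypothesis pi_fibre : forall u v : E, pi u = pi v -> forall w, qop u w = qop v w.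

Definition fibre (x : Q) : Type := {u : E | pi u = x}.

(* A bijection between the fibre over y and S, presented by total maps. *)
Record fibre_chart (S : Type) (y : Q) := FibreChart {
  chart : E -> S;
  lift : S -> E;
  lift_fibre : forall s, pi (lift s) = y;
  liftK : forall s, chart (lift s) = s;
  chartK : forall u, pi u = y -> lift (chart u) = u }.

Arguments chart {S y}.
Arguments lift {S y}.
Arguments lift_fibre {S y}.
Arguments liftK {S y}.
Arguments chartK {S y}.

Lemma fibre_translate_inv (u v : E) (y : Q) :
  pi (qop u v) = qop (pi u) y -> pi v = y.
Proof. intros H. apply (qop_inj (pi u)). rewrite <- pi_hom. exact H. Qed.

Definition fibre_chart_map {S : Type} {y y' : Q} {h h' : E -> E}
    (h'K : forall w, h' (h w) = w) (hK' : forall w, h (h' w) = w)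
    (h_fibre : forall w, pi w = y -> pi (h w) = y')
    (h'_fibre : forall w, pi w = y' -> pi (h' w) = y)
    (c : fibre_chart S y) : fibre_chart S y'.
Proof.
  refine (@FibreChart S y' (fun w => chart c (h' w)) (fun s => h (lift c s)) _ _ _).
  - intros s. apply h_fibre, lift_fibre.
  - intros s. rewrite h'K. apply liftK.
  - intros w Hw. rewrite chartK; [apply hK' | apply h'_fibre, Hw].
Defined.

Lemma fibre_chart_base (x : Q) : inhabited (fibre_chart (fibre x) x).
Proof.
  destruct (pi_surj x) as [u0 Hu0]. constructor.
  refine (@FibreChart (fibre x) x
            (fun u => match excluded_middle_informative (pi u = x) with
                      | left h => exist _ u h
                      | right _ => exist _ u0 Hu0 end)
            (@proj1_sig E _) (@proj2_sig E _) _ _).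
  - intros [u h]. simpl. destruct (excluded_middle_informative (pi u = x)); [| contradiction].
    f_equal. apply proof_irrelevance.
  - intros u h. destruct (excluded_middle_informative (pi u = x)); [reflexivity | contradiction].
Qed.

Lemma fibre_chart_translate (S : Type) (u : E) (y : Q) :
  inhabited (fibre_chart S y) <-> inhabited (fibre_chart S (qop (pi u) y)).
Proof.
  destruct (qop_bij u) as [g [gK Kg]].
  assert (Hu : forall w, pi w = y -> pi (qop u w) = qop (pi u) y).
  { intros w Hw. rewrite pi_hom, Hw. reflexivity. }
  assert (Hg : forall w, pi w = qop (pi u) y -> pi (g w) = y).
  { intros w Hw. apply (fibre_translate_inv u). rewrite Kg. exact Hw. }
  split; intros [c]; constructor.
  - exact (fibre_chart_map gK Kg Hu Hg c).
  - exact (fibre_chart_map Kg gK Hg Hu c).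
Qed.

Lemma fibre_charts_exist :
  connected Q -> exists S : Type, forall y : Q, inhabited (fibre_chart S y).
Proof.
  intros HQ. destruct (classic (inhabited Q)) as [[x0] | Hempty].
  2: { exists unit. intros y. destruct (Hempty (inhabits y)). }
  exists (fibre x0). intros y. induction (HQ x0 y) as [| y z _ IH | y z _ IH].
  - apply fibre_chart_base.
  - destruct (pi_surj z) as [u <-]. apply fibre_chart_translate, IH.
  - destruct (pi_surj z) as [u <-]. apply (fibre_chart_translate _ u), IH.
Qed.

Section CoverCocycle.

Variables (S : Type) (c : forall y : Q, fibre_chart S y) (sigma : Q -> E).
Hypothesis sigma_lift : forall x, pi (sigma x) = x.

Lemma qop_sigma {x : Q} {u : E} : pi u = x -> forall w, qop (sigma x) w = qop u w.
Proof. intros Hu. apply pi_fibre. rewrite sigma_lift. symmetry. exact Hu. Qed.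

Definition fibre_transport (x y : Q) (s : S) : S :=
  chart (c (qop x y)) (qop (sigma x) (lift (c y) s)).

Lemma lift_fibre_transport (x y : Q) (s : S) :
  lift (c (qop x y)) (fibre_transport x y s) = qop (sigma x) (lift (c y) s).
Proof.
  apply chartK. rewrite pi_hom, sigma_lift, lift_fibre. reflexivity.
Qed.

Lemma fibre_transport_bij (x y : Q) : bij (fibre_transport x y).
Proof.
  destruct (qop_bij (sigma x)) as [g [gK Kg]].
  exists (fun s => chart (c y) (g (lift (c (qop x y)) s))). split; intros s.
  - rewrite lift_fibre_transport, gK. apply liftK.
  - assert (Hg : pi (g (lift (c (qop x y)) s)) = y).
    { apply (fibre_translate_inv (sigma x)). rewrite Kg, sigma_lift. apply lift_fibre. }
    unfold fibre_transport. rewrite (chartK _ _ Hg), Kg. apply liftK.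
Qed.

Definition cover_cocycle (x y : Q) : Sym S := sym_of_bij (fibre_transport_bij x y).

Lemma sfun_cover_cocycle (x y : Q) : sfun (cover_cocycle x y) = fibre_transport x y.
Proof. apply sfun_sym_of_bij. Qed.

Lemma cover_cocycle_cocycle : quandle_cocycle cover_cocycle.
Proof.
  split.
  - intros x y z. apply sym_elt_eq. intros s.
    rewrite !sfun_mul, !sfun_cover_cocycle.
    unfold fibre_transport at 1 3.
    rewrite !lift_fibre_transport, (qop_dist x y z), (qop_dist (sigma x) (sigma y)).
    assert (Hxy : pi (qop (sigma x) (sigma y)) = qop x y).
    { rewrite pi_hom, !sigma_lift. reflexivity. }
    rewrite (qop_sigma Hxy). reflexivity.
  - intros x. apply sym_elt_eq. intros s.
    rewrite sfun_cover_cocycle, sfun_one. unfold fibre_transport.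
    rewrite (qop_sigma (lift_fibre (c x) s)), !qop_idem. apply liftK.
Qed.

Lemma cover_trivial_of_cohomologous :
  cohomologous_trivial cover_cocycle -> cover_is_trivial pi.
Proof.
  intros [gamma Hgamma].
  exists S, (fun u => (pi u, sinv (gamma (pi u)) (chart (c (pi u)) u))).
  split; [| split].
  - exists (fun v : Q * S => lift (c (fst v)) (sfun (gamma (fst v)) (snd v))).
    split.
    + intros u. simpl. rewrite sinvK. apply chartK. reflexivity.
    + intros [x s]. simpl. rewrite lift_fibre, liftK, sfunK. reflexivity.
  - intros u v. simpl. unfold triv_op; simpl. rewrite pi_hom. f_equal.
    pose proof (f_equal (fun p => sfun p (chart (c (pi v)) v))
                  (Hgamma (pi u) (pi v))) as H.
    simpl in H. rewrite sfun_cover_cocycle in H. unfold fibre_transport in H.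
    rewrite chartK, (qop_sigma (eq_refl (pi u))) in H by reflexivity.
    rewrite H, sfunK. reflexivity.
  - intros u. reflexivity.
Qed.

End CoverCocycle.

End Cover.

Lemma simply_connected_of_cohomologous_trivial (Q : quandle) :
  connected Q ->
  (forall (K : group) (theta : Q -> Q -> K),
      quandle_cocycle theta -> cohomologous_trivial theta) ->
  simply_connected Q.
Proof.
  intros HQ Hcoh. split; [exact HQ |]. intros E pi [Hhom [Hsurj Hfib]].
  destruct (fibre_charts_exist Q E pi Hhom Hsurj HQ) as [S HS].
  destruct (choice _ Hsurj) as [sigma Hsigma].
  set (c := fun y => epsilon (HS y) (fun _ => True)).
  apply (cover_trivial_of_cohomologous Q E pi Hhom Hfib S c sigma Hsigma), Hcoh.
  apply cover_cocycle_cocycle, Hfib.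
Qed.

Theorem proposition3p2 (Q : quandle) (HQ : connected Q) :
  ((forall (S : Type) (theta : Q -> Q -> Sym S),
       quandle_cocycle theta -> cohomologous_trivial theta)
   <-> (forall (K : group) (theta : Q -> Q -> K),
       quandle_cocycle theta -> cohomologous_trivial theta))
  /\ ((forall (K : group) (theta : Q -> Q -> K),
       quandle_cocycle theta -> cohomologous_trivial theta)
   <-> simply_connected Q).
Proof.
  split; split.
  - apply cohomologous_trivial_of_Sym.
  - intros Hcoh S. apply Hcoh.
  - apply simply_connected_of_cohomologous_trivial, HQ.
  - apply cohomologous_trivial_of_simply_connected.
Qed.
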